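(* Let $L\in\mathcal{G}(\Sigma_0,T_0)$ be a deterministic guarded language and let $(\mathfrak{s},\mathfrak{t})$ be a guarded language morphism with $\mathfrak{s}:\Sigma_0\to\mathcal{G}(\Sigma_1,T_1)$ and $\mathfrak{t}:T_0\to\mathsf{BA}(T_1)$. If $\mathfrak{s}(p)$ is deterministic for every $p\in\Sigma_0$, then $\mathrm{apply}^{\mathfrak{s}}_{\mathfrak{t}}(L)$ is deterministic.
   Context: For finite $T$, $\Sigma$: $\mathsf{BA}(T)$ are Boolean expressions over $T$; atoms $\mathsf{At}_T=2^T$; $\alpha\le b$ means $b$ holds under the assignment making exactly the tests in $\alpha$ true. Guarded strings: words in $\mathsf{At}_T(\Sigma\mathsf{At}_T)^*$; $\mathcal{G}(\Sigma,T)$ is the set of guarded languages regular over the alphabet $\mathsf{At}_T\cup\Sigma$. A guarded language is deterministic if for all distinct $w,w'$ in it, $w$ is not a proper prefix of $w'$ and the first position where $w,w'$ differ is an atom. $w'\alpha\diamond\alpha x'=w'\alpha x'$. A guarded language morphism is a pair $(\mathfrak{s},\mathfrak{t})$ with $\mathfrak{s}:\Sigma_0\to\mathcal{G}(\Sigma_1,T_1)$ and $\mathfrak{t}:T_0\to\mathsf{BA}(T_1)$. $\beta\in\mathsf{At}_{T_1}$ is $\mathfrak{t}$-consistent with $\alpha\in\mathsf{At}_{T_0}$ if for all $t\in T_0$, $\alpha\le t$ iff $\beta\le\mathfrak{t}(t)$. $\mathrm{apply}_{\mathfrak{t}}(L)$ = set of $\beta_0p_0\beta_1\cdots p_{n-1}\beta_n$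 such that some $\alpha_0p_0\cdots p_{n-1}\alpha_n\in L$ has each $\beta_i$ $\mathfrak{t}$-consistent with $\alpha_i$. For $L$ over $(\Sigma_0,T_1)$, $\mathrm{apply}^{\mathfrak{s}}(L)$ = set of $\alpha_0\diamond w_0\diamond\alpha_1\diamond\cdots\diamond w_{n-1}\diamond\alpha_n$ with $\alpha_0p_0\cdots p_{n-1}\alpha_n\in L$, $w_i\in\mathfrak{s}(p_i)$. $\mathrm{apply}^{\mathfrak{s}}_{\mathfrak{t}}=\mathrm{apply}^{\mathfrak{s}}\circ\mathrm{apply}_{\mathfrak{t}}$. *)

From mathcomp Require Import all_boot.
Set Implicit Arguments. Unset Strict Implicit. Unset Printing Implicit Defensive.

Inductive bexp (T : Type) : Type :=
| BFalse | BTrue | BTest of T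
| BAnd of bexp T & bexp T | BOr of bexp T & bexp T | BNot of bexp T.
Arguments BFalse {T}. Arguments BTrue {T}.

(* alpha <= b : b holds when exactly the tests in alpha are true.
   Atoms At_T = 2^T are represented as {set T}. *)
Fixpoint atom_le (T : finType) (alpha : {set T}) (b : bexp T) : bool :=
  match b with
  | BFalse => false
  | BTrue => true
  | BTest t => t \in alpha
  | BAnd b1 b2 => atom_le alpha b1 && atom_le alpha b2
  | BOr b1 b2 => atom_le alpha b1 || atom_le alpha b2
  | BNot b1 => ~~ atom_le alpha b1
  end.

Definition letter (T S : finType) : finType := ({set T} + S)%type.
Definition is_atom (T S : finType) (x : letter T S) : bool :=
  if x is inl _ then true else false.

Definition lang (T S : finType) := seq (letter T S) -> Prop.

Fixpoint guarded (T S : finType) (w : seq (letter T S)) : bool :=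
  match w with
  | inl _ :: rest =>
      match rest with
      | [::] => true
      | inr _ :: rest' => guarded rest'
      | _ => false
      end
  | _ => false
  end.

Definition regular (A : finType) (L : seq A -> Prop) : Prop :=
  exists (Q : finType) (q0 : Q) (d : Q -> A -> Q) (F : pred Q),
    forall w, L w <-> F (foldl d q0 w).

Definition in_G (T S : finType) (L : lang T S) : Prop :=
  (forall w, L w -> guarded w) /\ regular L.

Definition proper_prefix (A : eqType) (u v : seq A) : bool :=
  prefix u v && (u != v).

Definition deterministic (T S : finType) (L : lang T S) : Prop :=
  forall w w', L w -> L w' -> w <> w' ->
    ~~ proper_prefix w w' /\
    (forall i x0, i < size w -> i < size w' -> take i w = take i w' ->
       nth x0 w i <> nth x0 w' i -> is_atom (nth x0 w i)).

Definition consistent (T0 T1 : finType) (t : T0 -> bexp T1)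
  (beta : {set T1}) (alpha : {set T0}) : Prop :=
  forall x : T0, (x \in alpha) = atom_le beta (t x).

Fixpoint rel_word (T0 T1 S : finType) (t : T0 -> bexp T1)
  (y : seq (letter T1 S)) (x : seq (letter T0 S)) : Prop :=
  match y, x with
  | [::], [::] => True
  | inl b :: y', inl a :: x' => consistent t b a /\ rel_word t y' x'
  | inr p :: y', inr q :: x' => p = q /\ rel_word t y' x'
  | _, _ => False
  end.

Definition apply_t (T0 T1 S : finType) (t : T0 -> bexp T1) (L : lang T0 S)
  : lang T1 S :=
  fun y => exists x, L x /\ rel_word t y x.

(* partial coalesced concatenation: w'α ⋄ αx' = w'αx' *)
Definition diamond (A : eqType) (u v : seq A) (isat : A -> bool) : option (seq A) :=
  match rev u, v with
  | a :: _, b :: v' => if (a == b) && isat a then Some (u ++ v') else None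
  | _, _ => None
  end.

(* apply^s : the words α0 ⋄ w0 ⋄ α1 ⋄ ... ⋄ w_{n-1} ⋄ α_n *)
Inductive expand (T S0 S1 : finType) (s : S0 -> lang T S1)
  : seq (letter T S0) -> seq (letter T S1) -> Prop :=
| expand_last (a : {set T}) : expand s [:: inl a] [:: inl a]
| expand_step (a : {set T}) (p : S0) (rest : seq (letter T S0))
    (w y' z y : seq (letter T S1)) :
    s p w -> expand s rest y' ->
    diamond [:: inl a] w (@is_atom T S1) = Some z ->
    diamond z y' (@is_atom T S1) = Some y ->
    expand s (inl a :: inr p :: rest) y.

Definition apply_s (T S0 S1 : finType) (s : S0 -> lang T S1) (L : lang T S0)
  : lang T S1 :=
  fun y => exists x, L x /\ expand s x y.

Definition apply_st (T0 T1 S0 S1 : finType) (s : S0 -> lang T1 S1)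
  (t : T0 -> bexp T1) (L : lang T0 S0) : lang T1 S1 :=
  apply_s s (apply_t t L).

From mathcomp Require Import all_boot.
Set Implicit Arguments. Unset Strict Implicit.

(* Call two words an atom fork if they are equal or agree up to a position
   where they carry two distinct atoms; a language is deterministic iff any
   two of its words form an atom fork, and this property survives both halves
   of the morphism.  Under apply_t, atoms are replaced letterwise by
   t-consistent atoms, and an atom is t-consistent with at most one atom, so
   distinct atoms stay distinct.  Under apply_s, two expansions of an atom
   fork agree on the expansion of the common prefix up to the first differing
   atom; at each action letter p of the common prefix the chosen words of
   s p form an atom fork, and if they are distinct the coalesced words fork
   there, whatever follows. *)

Section AtomFork.
Variables (A : eqType) (isat : pred A).

Inductive atom_fork : seq A -> seq A -> Prop :=
| atom_fork_refl w : atom_fork w w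
| atom_fork_here a b u v :
    a <> b -> isat a -> isat b -> atom_fork (a :: u) (b :: v)
| atom_fork_cons c u v : atom_fork u v -> atom_fork (c :: u) (c :: v).

Lemma atom_fork_nil v : atom_fork [::] v -> v = [::].
Proof. by case: v => // c v F; inversion F. Qed.

Lemma atom_fork_consP c u v : atom_fork (c :: u) v ->
  (exists d v', [/\ v = d :: v', c <> d, isat c & isat d]) \/
  (exists v', v = c :: v' /\ atom_fork u v').
Proof.
move=> F; inversion F; subst.
- by right; exists u; split=> //; apply: atom_fork_refl.
- by left; exists b, v0.
- by right; exists v0.
Qed.

Lemma atom_fork_consK c u v : atom_fork (c :: u) (c :: v) -> atom_fork u v.
Proof. by case/atom_fork_consP=> [[d [v' [[<- _] []]]] | [v' [[<-]]]]. Qed.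

Lemma atom_fork_catl w u v : atom_fork u v -> atom_fork (w ++ u) (w ++ v).
Proof. by elim: w => //= c w IH F; apply/atom_fork_cons/IH. Qed.

Lemma atom_fork_catr u v u' v' :
  atom_fork u v -> u <> v -> atom_fork (u ++ u') (v ++ v').
Proof.
elim=> [w /(_ erefl) //|a b u0 v0 ab ha hb _|c u0 v0 _ IH uv].
  exact: atom_fork_here.
by apply/atom_fork_cons/IH => E; apply: uv; rewrite E.
Qed.

Lemma atom_fork_not_prefix u v : atom_fork u v -> u <> v -> ~~ prefix u v.
Proof.
elim=> [w /(_ erefl) //|a b u0 v0 ab _ _ _|c u0 v0 _ IH uv].
  by rewrite prefix_cons; apply/nandP; left; apply/eqP.
by rewrite prefix_cons eqxx; apply: IH => E; apply: uv; rewrite E.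
Qed.

Lemma atom_fork_first_diff u v i x0 : atom_fork u v ->
  take i u = take i v -> nth x0 u i <> nth x0 v i -> isat (nth x0 u i).
Proof.
move=> F; elim: F i => [w|a b u0 v0 ab ha _|c u0 v0 _ IH] [|i] //=.
- by case.
- by case=> /IH.
Qed.

Lemma atom_fork_of_first_diff u v :
  ~~ proper_prefix u v -> ~~ proper_prefix v u ->
  (forall i x0, i < size u -> i < size v -> take i u = take i v ->
     nth x0 u i <> nth x0 v i -> isat (nth x0 u i) && isat (nth x0 v i)) ->
  atom_fork u v.
Proof.
elim: u v => [|a u IH] [|b v] //; try by rewrite /proper_prefix.
- by move=> *; apply: atom_fork_refl.
move=> puv pvu diff.
have [eab|ab] := eqVneq a b.
  subst b; apply/atom_fork_cons/IH; rewrite /proper_prefix in puv pvu *.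
  + by rewrite prefix_cons eqseq_cons eqxx in puv.
  + by rewrite prefix_cons eqseq_cons eqxx in pvu.
  by move=> i x0 ? ? ? ?; apply: (diff i.+1) => //=; congr cons.
have /andP[ha hb] := diff 0 a erefl erefl erefl (elimN eqP ab).
by apply: atom_fork_here => //; apply/eqP.
Qed.

End AtomFork.

Definition atom_forking (T S : finType) (L : lang T S) : Prop :=
  forall w w', L w -> L w' -> atom_fork (@is_atom T S) w w'.

Lemma deterministic_atom_forkingP (T S : finType) (L : lang T S) :
  deterministic L <-> atom_forking L.
Proof.
split=> [D w w' Lw Lw' | F w w' Lw Lw' ww'].
  have [<-|ww'] := eqVneq w w'; first exact: atom_fork_refl.
  have [pww' diff] := D w w' Lw Lw' (elimN eqP ww').
  have w'w : w' <> w by apply/eqP; rewrite eq_sym.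
  have [pw'w diff'] := D w' w Lw' Lw w'w.
  apply: atom_fork_of_first_diff pww' pw'w _ => i x0 iw iw' tw nw.
  by rewrite diff //= diff' // => E; apply: nw.
have Fww' := F w w' Lw Lw'.
split=> [|i x0 _ _]; last exact: atom_fork_first_diff.
by rewrite /proper_prefix negb_and (atom_fork_not_prefix Fww' ww').
Qed.

Section ApplyTests.
Variables (T0 T1 S : finType) (t : T0 -> bexp T1).

Lemma consistent_eq b a1 a2 : consistent t b a1 -> consistent t b a2 -> a1 = a2.
Proof. by move=> c1 c2; apply/setP => x; rewrite c1 c2. Qed.

Lemma atom_fork_rel_word_cons c x x' y y' :
  rel_word t y (c :: x) -> rel_word t y' (c :: x') ->
  (forall z z', rel_word t z x -> rel_word t z' x' ->
     atom_fork (@is_atom T1 S) z z') ->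
  atom_fork (@is_atom T1 S) y y'.
Proof.
case: c => [a|q]; case: y => [|[b|p] y] //; case: y' => [|[b'|p'] y'] //=.
  move=> [_ r] [_ r'] IH.
  have [<-|bb'] := eqVneq b b'; first exact/atom_fork_cons/IH.
  by apply: atom_fork_here => // -[E]; rewrite E eqxx in bb'.
by move=> [-> r] [-> r'] IH; apply/atom_fork_cons/IH.
Qed.

Lemma atom_fork_rel_word_same x y y' :
  rel_word t y x -> rel_word t y' x -> atom_fork (@is_atom T1 S) y y'.
Proof.
elim: x y y' => [|c x IH] y y' r r'.
  by case: y r => [|[]] // _; case: y' r' => [|[]] // _; apply: atom_fork_refl.
exact: atom_fork_rel_word_cons r r' IH.
Qed.

Lemma atom_fork_rel_word x x' y y' : atom_fork (@is_atom T0 S) x x' ->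
  rel_word t y x -> rel_word t y' x' -> atom_fork (@is_atom T1 S) y y'.
Proof.
move=> F; elim: F y y' => [w|a a' x0 x0' aa' ha ha'|c x0 x0' _ IH] y y'.
- exact: atom_fork_rel_word_same.
- case: a aa' ha => [a|//] aa' _; case: a' aa' ha' => [a'|//] aa' _.
  case: y => [|[b|//] y] //; case: y' => [|[b'|//] y'] //= [cb _] [cb' _].
  apply: atom_fork_here => // -[E]; apply: aa'.
  by rewrite -E in cb'; rewrite (consistent_eq cb cb').
- by move=> r r'; apply: atom_fork_rel_word_cons r r' IH.
Qed.

Lemma atom_forking_apply_t (L : lang T0 S) :
  atom_forking L -> atom_forking (apply_t t L).
Proof.
move=> F y y' [x [Lx rx]] [x' [Lx' rx']].
exact: atom_fork_rel_word (F x x' Lx Lx') rx rx'.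
Qed.

End ApplyTests.

Lemma diamond_Some (A : eqType) (u v w : seq A) (isat : pred A) :
  diamond u v isat = Some w ->
  exists u0 c v0, [/\ u = rcons u0 c, v = c :: v0 & w = u ++ v0].
Proof.
rewrite /diamond; case E: (rev u) => [|a ra] //; case: v => [|b v0] //.
case: ifP => // /andP[/eqP <- _] [<-].
by exists (rev ra), a, v0; rewrite -rev_cons -E revK.
Qed.

Lemma diamond_single (A : eqType) (a : A) v w (isat : pred A) :
  diamond [:: a] v isat = Some w -> w = v.
Proof.
move=> /diamond_Some[u0 [c [v0 [Eu -> ->]]]].
by case: u0 Eu => [[->]|x u0 /(congr1 size)]; rewrite //= size_rcons.
Qed.

Lemma atom_fork_diamond (A : eqType) (isat isat' : pred A) u u' v v' w w' :
  atom_fork isat u u' -> atom_fork isat v v' ->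
  diamond u v isat' = Some w -> diamond u' v' isat' = Some w' ->
  atom_fork isat w w'.
Proof.
move=> Fu Fv /diamond_Some[u0 [c [v0 [Eu Ev ->]]]].
move=> /diamond_Some[u0' [c' [v0' [Eu' Ev' ->]]]].
have [Euu'|uu'] := eqVneq u u'; last exact/atom_fork_catr/eqP.
move: Euu'; rewrite Eu Eu' => /eqP.
rewrite eqseq_rcons => /andP[/eqP Eu0 /eqP Ec].
by subst; apply/atom_fork_catl/(@atom_fork_consK _ _ c').
Qed.

Section ApplySubstitution.
Variables (T S0 S1 : finType) (s : S0 -> lang T S1).

Lemma expand_head x y : expand s x y ->
  exists a x0 y0, x = inl a :: x0 /\ y = inl a :: y0.
Proof.
case=> [a|a p x0 w y0 z y1 _ _ /diamond_Some[? [? [v [_ _ ->]]]]];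
  first by exists a, [::], [::].
move=> /diamond_Some[? [? [v' [_ _ ->]]]].
by exists a, (inr p :: x0), (v ++ v').
Qed.

Lemma expand_lastE a y : expand s [:: inl a] y -> y = [:: inl a].
Proof. by move=> E; inversion E. Qed.

Lemma expand_consE a p x y : expand s (inl a :: inr p :: x) y ->
  exists w y0,
    [/\ s p w, expand s x y0 & diamond w y0 (@is_atom T S1) = Some y].
Proof.
move=> E; inversion E as [|? ? ? w y0 z ? sw ey0 Ez Ey]; subst.
by rewrite (diamond_single Ez) in Ey; exists w, y0.
Qed.

Hypothesis s_forking : forall p, atom_forking (s p).

Lemma atom_fork_expand_here a a' x x' y y' : inl a <> inl a' :> letter T S0 ->
  expand s (inl a :: x) y -> expand s (inl a' :: x') y' ->
  atom_fork (@is_atom T S1) y y'.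
Proof.
move=> aa' /expand_head[b [_ [z [[<- _] ->]]]].
move=> /expand_head[b' [_ [z' [[<- _] ->]]]].
by apply: atom_fork_here => // -[E]; apply: aa'; rewrite E.
Qed.

Lemma atom_fork_expand x x' y y' : atom_fork (@is_atom T S0) x x' ->
  expand s x y -> expand s x' y' -> atom_fork (@is_atom T S1) y y'.
Proof.
move=> F ex; elim: ex (ex) x' y' F => [a|a p x0 w y0 z y1 sw ex0 IH dz dy];
  move=> ex x' y' F ex'.
all: have [a' [x1 [? [Ex' _]]]] := expand_head ex'; subst x'.
all: case/atom_fork_consP: F => [[_ [_ [[<- _] aa' _ _]]]|[_ [[Ea <-] F]]];
  [exact: atom_fork_expand_here ex ex' | subst a'].
- rewrite (atom_fork_nil F) in ex'; rewrite (expand_lastE ex').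
  exact: atom_fork_refl.
- case/atom_fork_consP: F => [[_ [_ [_ _ //]]]|[x2 [Ex1 F]]]; subst x1.
  have [w' [y0' [sw' ex0' dy']]] := expand_consE ex'.
  rewrite (diamond_single dz) in dy.
  exact: atom_fork_diamond (s_forking sw sw') (IH ex0 _ _ F ex0') dy dy'.
Qed.

Lemma atom_forking_apply_s (L : lang T S0) :
  atom_forking L -> atom_forking (apply_s s L).
Proof.
move=> F y y' [x [Lx ex]] [x' [Lx' ex']].
exact: atom_fork_expand (F x x' Lx Lx') ex ex'.
Qed.

End ApplySubstitution.

Theorem proposition5p4 (S0 S1 T0 T1 : finType) (L : lang T0 S0)
  (s : S0 -> lang T1 S1) (t : T0 -> bexp T1) :
  in_G L -> (forall p, in_G (s p)) ->
  deterministic L -> (forall p, deterministic (s p)) ->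
  deterministic (apply_st s t L).
Proof.
move=> _ _ /deterministic_atom_forkingP DL Ds.
apply/deterministic_atom_forkingP.
apply: atom_forking_apply_s => [p|]; first exact/deterministic_atom_forkingP.
exact: atom_forking_apply_t.
Qed.
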